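(* Let $G=(V,E)$ be a non-bipartite graph with $n=|V|\ge 5$ vertices, and let $K,K'$ be $k$-cliques of $G$ where $n-k-1=\binom{k}{2}$. Let $H$ be the bipartite graph with vertex set $V\cup E$ (bipartition $\{V,E\}$) and edge set $\{\{v,e\} : v\in V,\ e\in E,\ v\notin e\}$. Let $p=n-k-1$. Let $S$ be obtained from $(V\setminus K)\cup E(K)$ by removing an arbitrary vertex of $V\setminus K$, and let $S'$ be obtained from $(V\setminus K')\cup E(K')$ by removing an arbitrary vertex of $V\setminus K'$ (so $S,S'$ are $(p,p)$-bicliques of $H$). If there is a TJ-sequence of $k$-cliques from $K$ to $K'$ in $G$, then there is a TJ-sequence of $(p,p)$-bicliques from $S$ to $S'$ in $H$.
   Context: For $U\subseteq V$, $E(U)$ denotes the set of edges of $G$ with both endpoints in $U$. A $k$-clique is a set of $k$ pairwise adjacent vertices. A TJ-sequence of $k$-cliques is a sequence $K_0,\dots,K_\ell$ of $k$-cliques with $|K_i\setminus K_{i+1}|=|K_{i+1}\setminus K_i|=1$ for all $i$. A vertex set $S$ is a $(p,q)$-biclique of $H$ if $H[S]$ is isomorphic to $K_{p,q}$; a TJ-sequence of $(p,p)$-bicliques is a sequence $S_0,\dots,S_\ell$ of $(p,p)$-bicliques with $|S_i\setminus S_{i+1}|=|S_{i+1}\setminus S_i|=1$ for all $i$. *)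

From mathcomp Require Import all_boot.
Set Implicit Arguments. Unset Strict Implicit. Unset Printing Implicit Defensive.

Definition simple_graph (T : finType) (g : rel T) : Prop :=
  irreflexive g /\ symmetric g.

Definition bipartite (T : finType) (g : rel T) : Prop :=
  exists f : T -> bool, forall x y, g x y -> f x != f y.

Definition is_clique (T : finType) (g : rel T) (k : nat) (K : {set T}) : bool :=
  (#|K| == k) && [forall x in K, forall y in K, (x != y) ==> g x y].

Definition is_edge (T : finType) (g : rel T) (e : {set T}) : bool :=
  [exists x, exists y, g x y && (e == [set x; y])].

Definition edge_t (T : finType) (g : rel T) := {e : {set T} | is_edge g e}.

Definition Hrel (T : finType) (g : rel T) : rel (T + edge_t g) :=
  fun a b => match a, b with
             | inl v, inr e => v \notin val e
             | inr e, inl v => v \notin val e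
             | _, _ => false
             end.

(* S is a (p,q)-biclique of h: h[S] is isomorphic to K_{p,q}, i.e. S splits
   into parts A, S\A of sizes p, q with x ~ y (x,y in S) iff exactly one of
   them is in A. *)
Definition is_biclique (U : finType) (h : rel U) (p q : nat) (S : {set U}) : Prop :=
  exists A : {set U}, [/\ A \subset S, #|A| = p, #|S :\: A| = q &
    forall x y, x \in S -> y \in S -> h x y = ((x \in A) != (y \in A))].

Definition tj_step (U : finType) (A B : {set U}) : bool :=
  (#|A :\: B| == 1) && (#|B :\: A| == 1).

Definition TJ_seq (U : finType) (P : {set U} -> Prop) (X Y : {set U}) : Prop :=
  exists s : seq {set U},
    [/\ path (@tj_step U) X s, last X s = Y & forall Z, Z \in X :: s -> P Z].

Definition edges_in (T : finType) (g : rel T) (K : {set T}) : {set T + edge_t g} :=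
  inr @: [set e : edge_t g | val e \subset K].

Definition S_of (T : finType) (g : rel T) (K : {set T}) (v : T) : {set T + edge_t g} :=
  ((inl @: (~: K)) :|: edges_in g K) :\ inl v.

From mathcomp Require Import all_boot zify.
Set Implicit Arguments. Unset Strict Implicit. Unset Printing Implicit Defensive.

(* A set of p vertices X and p edges F of G such that no vertex of X lies on an
   edge of F spans a (p,p)-biclique of H. Two such pairs drawn from a vertex set
   D and an edge set E with no vertex of D on an edge of E are joined in H by
   exchanging one vertex at a time, then one edge at a time. S_of K w is the pair
   (V \ (K u {w}), E(K)), both of size p = n - k - 1 = C(k,2). When a clique
   jumps from K to K1 = K - a + b, first move the removed vertex w to b: then
   S_of K b and S_of K1 a have the same vertex part V \ (K u K1) and all their
   edges lie inside K u K1, so they are joined by such exchanges. *)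

Section TJSequences.
Variables (U : finType) (P : {set U} -> Prop).

Lemma TJ_seq_refl X : P X -> TJ_seq P X X.
Proof. by move=> PX; exists [::]; split=> // Z; rewrite inE => /eqP->. Qed.

Lemma TJ_seq_trans X Y Z : TJ_seq P X Y -> TJ_seq P Y Z -> TJ_seq P X Z.
Proof.
case=> s1 [p1 l1 P1] [s2 [p2 l2 P2]]; exists (s1 ++ s2); split.
- by rewrite cat_path p1 l1.
- by rewrite last_cat l1.
- move=> W; rewrite -cat_cons mem_cat => /orP[/P1 //|Ws2].
  by apply: P2; rewrite inE Ws2 orbT.
Qed.

Lemma TJ_seq_step X Y : P X -> P Y -> tj_step X Y -> TJ_seq P X Y.
Proof.
move=> PX PY XY; exists [:: Y]; split=> /=; rewrite ?XY //.
by move=> Z; rewrite !inE => /orP[] /eqP->.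
Qed.

Lemma tj_step_swap (A : {set U}) x y :
  x \in A -> y \notin A -> tj_step A (y |: A :\ x).
Proof.
move=> xA yA; rewrite /tj_step.
have xy : x != y by apply: contraNneq yA => <-.
have -> : A :\: (y |: A :\ x) = [set x].
  apply/setP=> z; rewrite !inE; case: (eqVneq z x) => [->|_].
    by rewrite xA (negbTE xy).
  by case: (z \in A); rewrite /= ?orbT ?andbF.
have -> : (y |: A :\ x) :\: A = [set y].
  apply/setP=> z; rewrite !inE; case: (eqVneq z y) => [->|_]; first by rewrite (negbTE yA).
  by case: (z \in A); rewrite ?andbF.
by rewrite !cards1.
Qed.

Lemma TJ_seq_within (D A B : {set U}) :
  A \subset D -> B \subset D -> #|A| = #|B| ->
  (forall C : {set U}, C \subset D -> #|C| = #|B| -> P C) -> TJ_seq P A B.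
Proof.
move=> + BD + PD; have [n] := ubnP #|A :\: B|; elim: n A => // n IH A ltAn AD cAB.
have PA := PD A AD cAB.
have [AB0 | [x]] := set_0Vmem (A :\: B).
  have <- : A = B by apply/eqP; rewrite eqEcard -setD_eq0 AB0 eqxx cAB leqnn.
  exact: TJ_seq_refl.
rewrite inE => /andP[xB xA].
have /card_gt0P[y] : 0 < #|B :\: A|.
  by rewrite cardsD setIC -cAB -cardsD; apply/card_gt0P; exists x; rewrite inE xB.
rewrite inE => /andP[yA yB].
have cA' : #|y |: A :\ x| = #|A|.
  by rewrite cardsU1 !inE negb_and yA orbT (cardsD1 x A) xA.
have A'B : (y |: A :\ x) :\: B = A :\: B :\ x.
  apply/setP=> z; rewrite !inE; case: (eqVneq z y) => [->|_]; first by rewrite yB !andbF.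
  by case: (z \in B); rewrite ?andbF.
have A'D : y |: A :\ x \subset D.
  by rewrite subUset sub1set (subsetP BD) // (subset_trans (subsetDl _ _)).
apply: TJ_seq_trans (TJ_seq_step PA (PD _ A'D _) (tj_step_swap xA yA)) (IH _ _ A'D _).
- by rewrite cA'.
- move: ltAn; rewrite A'B (cardsD1 x (A :\: B)) !inE xB xA; lia.
- by rewrite cA'.
Qed.

End TJSequences.

Lemma TJ_seq_map (U W : finType) (f : {set U} -> {set W}) P Q (A B : {set U}) :
  (forall C D, tj_step C D -> tj_step (f C) (f D)) -> (forall C, P C -> Q (f C)) ->
  TJ_seq P A B -> TJ_seq Q (f A) (f B).
Proof.
move=> ftj fPQ [s [ps ls Ps]]; exists (map f s); split.
- by elim: s A ps {ls Ps} => //= C s IH X /andP[/ftj-> /IH].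
- by rewrite last_map ls.
- by move=> Z; rewrite -map_cons => /mapP[C /Ps PC ->]; exact: fPQ.
Qed.

Section SumSets.
Variables (A B : finType).

Definition sumset (X : {set A}) (F : {set B}) : {set A + B} :=
  [set z | match z with inl x => x \in X | inr e => e \in F end].

Lemma sumsetDl (X Y : {set A}) (F : {set B}) :
  sumset X F :\: sumset Y F = inl @: (X :\: Y).
Proof.
apply/setP=> -[x|e]; rewrite !inE; first by rewrite (mem_imset _ _ inl_inj) inE.
by rewrite andNb; apply/esym/imsetP => -[].
Qed.

Lemma sumsetDr (X : {set A}) (F G : {set B}) :
  sumset X F :\: sumset X G = inr @: (F :\: G).
Proof.
apply/setP=> -[x|e]; rewrite !inE; last by rewrite (mem_imset _ _ inr_inj) inE.
by rewrite andNb; apply/esym/imsetP => -[].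
Qed.

Lemma tj_step_sumsetl (F : {set B}) (X Y : {set A}) :
  tj_step X Y -> tj_step (sumset X F) (sumset Y F).
Proof. by rewrite /tj_step !sumsetDl !card_imset //; exact: inl_inj. Qed.

Lemma tj_step_sumsetr (X : {set A}) (F G : {set B}) :
  tj_step F G -> tj_step (sumset X F) (sumset X G).
Proof. by rewrite /tj_step !sumsetDr !card_imset //; exact: inr_inj. Qed.

End SumSets.

Section BicliquesOfH.
Variables (V : finType) (g : rel V).

Lemma sumset_biclique p (X : {set V}) (F : {set edge_t g}) :
  #|X| = p -> #|F| = p -> {in X & F, forall (x : V) (e : edge_t g), x \notin val e} ->
  is_biclique (@Hrel V g) p p (sumset X F).
Proof.
move=> cX cF XF; exists (sumset X set0); split.
- by apply/subsetP=> -[x|e]; rewrite !inE.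
- have -> : sumset X set0 = sumset X set0 :\: sumset set0 (set0 : {set edge_t g}).
    by apply/setP=> -[x|e]; rewrite !inE ?andbF.
  by rewrite sumsetDl setD0 card_imset //; exact: inl_inj.
- by rewrite sumsetDr setD0 card_imset //; exact: inr_inj.
- move=> [x|e] [y|f]; rewrite !inE //= => xS yS; rewrite ?xS ?yS //; exact: XF.
Qed.

Lemma sumset_TJ_seq p (D X1 X2 : {set V}) (E F1 F2 : {set edge_t g}) :
  X1 \subset D -> X2 \subset D -> F1 \subset E -> F2 \subset E ->
  #|X1| = p -> #|X2| = p -> #|F1| = p -> #|F2| = p ->
  {in D & E, forall (x : V) (e : edge_t g), x \notin val e} ->
  TJ_seq (is_biclique (@Hrel V g) p p) (sumset X1 F1) (sumset X2 F2).
Proof.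
move=> X1D X2D F1E F2E cX1 cX2 cF1 cF2 DE.
have bic (X : {set V}) (F : {set edge_t g}) :
    X \subset D -> F \subset E -> #|X| = p -> #|F| = p ->
    is_biclique (@Hrel V g) p p (sumset X F).
  move=> XD FE cX cF; apply: sumset_biclique => // x e xX eF.
  by apply: DE; [apply: (subsetP XD) | apply: (subsetP FE)].
apply: (TJ_seq_trans (Y := sumset X2 F1)).
- apply: (TJ_seq_map (f := fun X => sumset X F1) (P := fun X => X \subset D /\ #|X| = p)).
  + exact: tj_step_sumsetl.
  + by move=> X [XD cX]; apply: bic.
  + by apply: (TJ_seq_within X1D X2D); rewrite ?cX1 ?cX2.
- apply: (TJ_seq_map (f := sumset X2) (P := fun F => F \subset E /\ #|F| = p)).
  + exact: tj_step_sumsetr.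
  + by move=> F [FE cF]; apply: bic.
  + by apply: (TJ_seq_within F1E F2E); rewrite ?cF1 ?cF2.
Qed.

End BicliquesOfH.

Definition induced_edges (V : finType) (g : rel V) (K : {set V}) : {set edge_t g} :=
  [set e : edge_t g | val e \subset K].

Lemma S_of_sumset (V : finType) (g : rel V) (K : {set V}) v :
  S_of g K v = sumset (~: K :\ v) (induced_edges g K).
Proof.
have inl_inr (X : {set edge_t g}) y : (inl y \in inr @: X) = false.
  by apply/imsetP => -[].
have inr_inl (X : {set V}) e : (inr e \in inl @: X) = false.
  by apply/imsetP => -[].
apply/setP=> -[x|e]; rewrite /S_of /edges_in !inE ?inl_inr ?inr_inl.
- by rewrite (mem_imset _ _ inl_inj) inE orbF.
- by rewrite (mem_imset _ _ inr_inj) inE.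
Qed.

Lemma card_induced_edges (V : finType) (g : rel V) k (K : {set V}) :
  irreflexive g -> is_clique g k K -> #|induced_edges g K| = 'C(k, 2).
Proof.
move=> irr /andP[/eqP cK cl].
rewrite -cK -cards_draws -(card_imset _ val_inj).
apply: eq_card => B; rewrite inE; apply/imsetP/andP.
- move=> [[B' eB']]; rewrite inE /= => B'K ->; split=> //.
  case/existsP: eB' => x /existsP[y /andP[gxy /eqP ->]].
  by rewrite cards2; case: (eqVneq x y) gxy => [->|]; rewrite ?irr.
- move=> [BK /cards2P[x [y [xy BE]]]].
  have gxy : g x y.
    have [xK yK] : x \in K /\ y \in K by rewrite !(subsetP BK) // BE !inE eqxx ?orbT.
    by move/forall_inP/(_ x xK)/forall_inP/(_ y yK): cl; rewrite xy.
  have eB : is_edge g B.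
    by apply/existsP; exists x; apply/existsP; exists y; rewrite gxy BE eqxx.
  by exists (exist _ B eB); rewrite ?inE.
Qed.

Section CliqueReconfiguration.
Variables (V : finType) (g : rel V) (k : nat).
Hypothesis g_irr : irreflexive g.
Hypothesis p_eq : #|V| - k - 1 = 'C(k, 2).
Local Notation p := (#|V| - k - 1).

Lemma S_of_TJ_seq (K K1 : {set V}) w w1 :
  is_clique g k K -> is_clique g k K1 -> w \notin K -> w1 \notin K1 ->
  K1 :\: K \subset [set w] -> K :\: K1 \subset [set w1] ->
  TJ_seq (is_biclique (@Hrel V g) p p) (S_of g K w) (S_of g K1 w1).
Proof.
move=> cK cK1 wK w1K1 K1K KK1; rewrite !S_of_sumset.
have card_out (L : {set V}) u : is_clique g k L -> u \notin L -> #|~: L :\ u| = p.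
  move=> /andP[/eqP cL _] uL; move: (cardsD1 u (~: L)) (cardsC L).
  rewrite !inE uL cL /=; lia.
have out_sub (L L' : {set V}) u :
    L' :\: L \subset [set u] -> ~: L :\ u \subset ~: (L :|: L').
  move=> /subsetP L'L; apply/subsetP=> x; rewrite !inE negb_or => /andP[xu xL].
  by rewrite xL; apply: contra xu => xL'; rewrite -in_set1 L'L // inE xL' xL.
have edges_sub (L L' : {set V}) : induced_edges g L \subset induced_edges g (L :|: L').
  by apply/subsetP=> e; rewrite !inE => /subset_trans; apply; exact: subsetUl.
apply: (sumset_TJ_seq (D := ~: (K :|: K1)) (E := induced_edges g (K :|: K1))).
- exact: out_sub.
- by rewrite setUC; exact: out_sub.
- exact: edges_sub.
- by rewrite setUC; exact: edges_sub.
- exact: card_out.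
- exact: card_out.
- by rewrite (card_induced_edges (k := k)) // p_eq.
- by rewrite (card_induced_edges (k := k)) // p_eq.
- move=> x e; rewrite in_setC [e \in _]inE => xKK1 /subsetP eKK1.
  exact: contra (eKK1 x) xKK1.
Qed.

Lemma S_of_TJ_seq_path (K : {set V}) s w w' :
  path (@tj_step V) K s -> (forall Z, Z \in K :: s -> is_clique g k Z) ->
  w \notin K -> w' \notin last K s ->
  TJ_seq (is_biclique (@Hrel V g) p p) (S_of g K w) (S_of g (last K s) w').
Proof.
elim: s K w => [|K1 s IH] K w /=; move=> + cl wK w'K; have cK := cl K (mem_head _ _).
  by move=> _; apply: S_of_TJ_seq; rewrite ?setDv ?sub0set.
case/andP=> /andP[/cards1P[a KaK1] /cards1P[b K1bK]] ps.
have cK1 : is_clique g k K1 by apply: cl; rewrite !inE eqxx orbT.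
have [aK1 aK] : a \notin K1 /\ a \in K.
  by move/setP/(_ a): KaK1; rewrite !inE eqxx => /andP.
have [bK bK1] : b \notin K /\ b \in K1.
  by move/setP/(_ b): K1bK; rewrite !inE eqxx => /andP.
apply: (TJ_seq_trans (S_of_TJ_seq cK cK wK bK _ _)); rewrite ?setDv ?sub0set //.
apply: (TJ_seq_trans (S_of_TJ_seq cK cK1 bK aK1 _ _)); rewrite ?KaK1 ?K1bK //.
by apply: IH => // Z Zs; apply: cl; rewrite inE Zs orbT.
Qed.

End CliqueReconfiguration.

Theorem lemma3 (V : finType) (g : rel V) (k : nat) (K K' : {set V}) (v v' : V) :
  simple_graph g ->
  ~ bipartite g ->
  5 <= #|V| ->
  is_clique g k K -> is_clique g k K' ->
  #|V| - k - 1 = 'C(k, 2) ->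
  v \notin K -> v' \notin K' ->
  TJ_seq (fun X => is_clique g k X) K K' ->
  TJ_seq (is_biclique (@Hrel V g) (#|V| - k - 1) (#|V| - k - 1))
         (S_of g K v) (S_of g K' v').
Proof.
move=> [g_irr _] _ _ _ _ p_eq vK v'K' [s [ps sK' cl]]; subst K'.
exact: (S_of_TJ_seq_path g_irr p_eq ps cl vK v'K').
Qed.
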